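(* For every finite set of formulas $T$ and formula $\phi$ of $\mathsf{JRC}$: if $T\models_{\mathsf{JRC}}\phi$, then $T\vdash_{\mathsf{JRC}}\phi$.
   Context: Language of $\mathsf{JRC}$: countable sets $\mathsf{Var}$ (justification variables) and $\mathsf{Prop}$ (atoms). Terms $t ::= x \mid t+t$ ($x\in\mathsf{Var}$); formulas $\phi ::= p \mid {\sim}\phi \mid \phi\wedge\phi \mid \phi\to\phi \mid \phi\rightsquigarrow\phi \mid t{:}\phi$. A Routley relational model is $\mathcal M=(W,W_N,R,R_{Fm},R_{Tm},{*},\mathcal V)$ where $W$ is nonempty, $W_N\subseteq W$ nonempty (normal states); $R\subseteq W\times W\times W$ satisfies: for $w\in W_N$, $Rwvu$ iff $v=u$; $R_{Fm}$ assigns to each formula $\phi$ a relation $R_\phi\subseteq W\times W$; $R_{Tm}$ assigns to each term $t$ a relation $R_t\subseteq W\times W$; ${*}:W\to W$ with $w^{**}=w$; $\mathcal V:\mathsf{Prop}\to\mathcal P(W)$. Truth at every $w\in W$: $p$ iff $w\in\mathcal V(p)$; ${\sim}\phi$ iff $w^*\not\models\phi$; $\phi\wedge\psi$ iff both; $\phi\to\psi$ iff for all $v,u$ with $Rwvu$, $v\models\phi$ implies $u\models\psi$; $\phi\rightsquigarrow\psi$ iff $R_\phi(w)\subseteq[\psi]$; $t{:}\phi$ iff $R_t(w)\subseteq[\phi]$; $[\phi]=\{w\in W:w\models\phi\}$. A $\mathsf{JRC}$-model is a Routley relational model with: (1) $R_\phi(w)\subseteq[\phi]$ for all $w\in W_N$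 and all $\phi$; (2) for all $w\in W$, if $w\in[\phi]$ then $w\in R_\phi(w)$; (3) $R_{s+t}\subseteq R_s\cap R_t$. $T\models_{\mathsf{JRC}}\phi$ iff for every $\mathsf{JRC}$-model and every $w\in W_N$, if all members of $T$ are true at $w$ then $\phi$ is true at $w$. Tableaux: labels are elements of $\{0,1,2,\dots\}\cup\{0^\sharp,1^\sharp,2^\sharp,\dots\}$, with $\bar i=i^\sharp$ and $\overline{i^\sharp}=i$. Nodes have the forms $\phi,+x$; $\phi,-x$; $x\rhd_\phi y$; $x\rhd_t y$; $rxyz$. Rules (applied to a branch; $x,y,z$ arbitrary labels; $j,k$ natural numbers): (T$\sim$) from ${\sim}\phi,+x$ add $\phi,-\bar x$; (F$\sim$) from ${\sim}\phi,-x$ add $\phi,+\bar x$; (T$\wedge$) from $\phi\wedge\psi,+x$ add $\phi,+x$ and $\psi,+x$; (F$\wedge$) from $\phi\wedge\psi,-x$ split into $\phi,-x$ | $\psi,-x$; (T$\to$) from $\phi\to\psi,+x$ and $rxyz$ split into $\phi,-y$ | $\psi,+z$; (F$\to$) from $\phi\to\psi,-x$ add $rxjk$, $\phi,+j$, $\psi,-k$ with $j,k$ new, and $j=k$ if $x=0$; (T$\rightsquigarrow$) from $\phi\rightsquigarrow\psi,+x$ and $x\rhd_\phi y$ add $\psi,+y$; (F$\rightsquigarrow$) for $x\neq0$, from $\phi\rightsquigarrow\psi,-x$ add $x\rhd_\phi j$ and $\psi,-j$, $j$ new; (F$\rightsquigarrow_0$) from $\phi\rightsquigarrow\psi,-0$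 add $0\rhd_\phi j$, $\phi,+j$, $\psi,-j$, $j$ new; (Cut$_r$) if $\phi$ occurs on the branch as the antecedent of a $\rightsquigarrow$-formula and $x$ occurs on the branch, split into $\phi,-x$ | ($\phi,+x$ and $x\rhd_\phi x$); (T:) from $t{:}\phi,+x$ and $x\rhd_t y$ add $\phi,+y$; (F:) from $t{:}\phi,-x$ add $x\rhd_t j$ and $\phi,-j$, $j$ new; ($\rhd_+$) from $x\rhd_{s+t}y$ add $x\rhd_s y$ and $x\rhd_t y$; (Normality) for any $x$ occurring on the branch add $r0xx$. A branch is closed if it contains $\phi,+x$ and $\phi,-x$ for some $\phi,x$; a tableau is closed if all its branches are. $T\vdash_{\mathsf{JRC}}\phi$ iff there is a closed tableau whose initial single branch consists of $\psi,+0$ for each $\psi\in T$ and $\phi,-0$. *)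

From Stdlib Require Import List.
Import ListNotations.

Inductive tm : Type :=
| TVar : nat -> tm
| TPlus : tm -> tm -> tm.

Inductive fm : Type :=
| Atom : nat -> fm
| Neg : fm -> fm
| And : fm -> fm -> fm
| Imp : fm -> fm -> fm
| Cond : fm -> fm -> fm
| Just : tm -> fm -> fm.

Record rmodel : Type := {
  W : Type;
  WN : W -> Prop;
  WN_nonempty : exists w, WN w;
  R : W -> W -> W -> Prop;
  R_normal : forall w v u, WN w -> (R w v u <-> v = u);
  RFm : fm -> W -> W -> Prop;
  RTm : tm -> W -> W -> Prop;
  star : W -> W;
  star_invol : forall w, star (star w) = w;
  V : nat -> W -> Prop
}.

Fixpoint sat (M : rmodel) (w : W M) (f : fm) {struct f} : Prop :=
  match f with
  | Atom p => V M p w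
  | Neg a => ~ sat M (star M w) a
  | And a b => sat M w a /\ sat M w b
  | Imp a b => forall v u, R M w v u -> sat M v a -> sat M u b
  | Cond a b => forall v, RFm M a w v -> sat M v b
  | Just t a => forall v, RTm M t w v -> sat M v a
  end.

Definition JRC_model (M : rmodel) : Prop :=
  (forall w a v, WN M w -> RFm M a w v -> sat M v a) /\
  (forall w a, sat M w a -> RFm M a w w) /\
  (forall s t w v, RTm M (TPlus s t) w v -> RTm M s w v /\ RTm M t w v).

Definition entails (T : list fm) (phi : fm) : Prop :=
  forall M : rmodel, JRC_model M ->
  forall w : W M, WN M w ->
  (forall psi, In psi T -> sat M w psi) -> sat M w phi.

(* Labels: LN i is i, LS i is i^sharp. *)
Inductive label : Type :=
| LN : nat -> label
| LS : nat -> label.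

Definition bar (x : label) : label :=
  match x with LN i => LS i | LS i => LN i end.

Inductive node : Type :=
| NF : fm -> bool -> label -> node          (* phi,+x (true) / phi,-x (false) *)
| NRF : fm -> label -> label -> node
| NRT : tm -> label -> label -> node
| NR : label -> label -> label -> node.

Definition labels_of (n : node) : list label :=
  match n with
  | NF _ _ x => [x]
  | NRF _ x y => [x; y]
  | NRT _ x y => [x; y]
  | NR x y z => [x; y; z]
  end.

Definition occurs (x : label) (B : list node) : Prop :=
  exists n, In n B /\ In x (labels_of n).

Definition fresh (j : nat) (B : list node) : Prop := ~ occurs (LN j) B.

(* closes B : the branch B can be extended, by applying the rules, to a
   tableau all of whose branches are closed. *)
Inductive closes : list node -> Prop :=
| c_closed : forall B f x,
    In (NF f true x) B -> In (NF f false x) B -> closes B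
| c_Tneg : forall B a x,
    In (NF (Neg a) true x) B -> closes (NF a false (bar x) :: B) -> closes B
| c_Fneg : forall B a x,
    In (NF (Neg a) false x) B -> closes (NF a true (bar x) :: B) -> closes B
| c_Tand : forall B a b x,
    In (NF (And a b) true x) B ->
    closes (NF a true x :: NF b true x :: B) -> closes B
| c_Fand : forall B a b x,
    In (NF (And a b) false x) B ->
    closes (NF a false x :: B) -> closes (NF b false x :: B) -> closes B
| c_Timp : forall B a b x y z,
    In (NF (Imp a b) true x) B -> In (NR x y z) B ->
    closes (NF a false y :: B) -> closes (NF b true z :: B) -> closes B
| c_Fimp : forall B a b x j k,
    In (NF (Imp a b) false x) B -> fresh j B -> fresh k B ->
    (x = LN 0 -> j = k) -> (x <> LN 0 -> j <> k) ->
    closes (NR x (LN j) (LN k) :: NF a true (LN j) :: NF b false (LN k) :: B) ->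
    closes B
| c_Tcond : forall B a b x y,
    In (NF (Cond a b) true x) B -> In (NRF a x y) B ->
    closes (NF b true y :: B) -> closes B
| c_Fcond : forall B a b x j,
    x <> LN 0 -> In (NF (Cond a b) false x) B -> fresh j B ->
    closes (NRF a x (LN j) :: NF b false (LN j) :: B) -> closes B
| c_Fcond0 : forall B a b j,
    In (NF (Cond a b) false (LN 0)) B -> fresh j B ->
    closes (NRF a (LN 0) (LN j) :: NF a true (LN j) :: NF b false (LN j) :: B) ->
    closes B
| c_cut : forall B a x,
    (exists b s y, In (NF (Cond a b) s y) B) -> occurs x B ->
    closes (NF a false x :: B) ->
    closes (NF a true x :: NRF a x x :: B) -> closes B
| c_Tjust : forall B t a x y,
    In (NF (Just t a) true x) B -> In (NRT t x y) B ->
    closes (NF a true y :: B) -> closes B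
| c_Fjust : forall B t a x j,
    In (NF (Just t a) false x) B -> fresh j B ->
    closes (NRT t x (LN j) :: NF a false (LN j) :: B) -> closes B
| c_plus : forall B s t x y,
    In (NRT (TPlus s t) x y) B ->
    closes (NRT s x y :: NRT t x y :: B) -> closes B
| c_norm : forall B x,
    occurs x B -> closes (NR (LN 0) x x :: B) -> closes B.

Definition derivable (T : list fm) (phi : fm) : Prop :=
  closes (NF phi false (LN 0) :: map (fun psi => NF psi true (LN 0)) T).

From Stdlib Require Import List Arith Lia Cantor Classical ClassicalEpsilon ProofIrrelevance.
Import ListNotations.

(* Completeness by a canonical model.  If the initial branch has no closed
   tableau, a fair systematic procedure, which applies every rule instance
   eventually and always continues along a branch that does not close, yields
   in the limit an open saturated set [H] of nodes.  The labels occurring in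
   [H] form a JRC-model: [0] is the only normal world, the accessibility
   relations are read off the relational nodes of [H] ([R] is the identity at
   [0], which the normality nodes [r0xx] make compatible with (T->)), and the
   star sends a label to its bar when that occurs.  A truth lemma, by induction on formulas,
   shows that [phi,+x] in [H] makes [phi] true at [x] and [phi,-x] makes it
   false, so the world [0] refutes [T |= phi].  The cut rule is what makes
   [w |= phi] imply [w R_phi w], and (F~>_0) what makes every [R_phi]-successor
   of [0] satisfy [phi]. *)

Definition label_eq (x y : label) : {x = y} + {x <> y}.
Proof. decide equality; apply Nat.eq_dec. Defined.

Definition tm_eq (s t : tm) : {s = t} + {s <> t}.
Proof. decide equality; apply Nat.eq_dec. Defined.

Definition fm_eq (f g : fm) : {f = g} + {f <> g}.
Proof. decide equality; try apply Nat.eq_dec; apply tm_eq. Defined.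

Lemma bar_involutive (x : label) : bar (bar x) = x.
Proof. destruct x; reflexivity. Qed.

Definition occurs_in (H : node -> Prop) (x : label) : Prop :=
  exists n, H n /\ In x (labels_of n).

Set Implicit Arguments.
Unset Strict Implicit.

Record saturated (H : node -> Prop) : Prop := {
  sat_consistent : forall f x, H (NF f true x) -> H (NF f false x) -> False;
  sat_Tneg : forall a x, H (NF (Neg a) true x) -> H (NF a false (bar x));
  sat_Fneg : forall a x, H (NF (Neg a) false x) -> H (NF a true (bar x));
  sat_Tand : forall a b x, H (NF (And a b) true x) -> H (NF a true x) /\ H (NF b true x);
  sat_Fand : forall a b x, H (NF (And a b) false x) -> H (NF a false x) \/ H (NF b false x);
  sat_Timp : forall a b x y z, H (NF (Imp a b) true x) -> H (NR x y z) ->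
    H (NF a false y) \/ H (NF b true z);
  sat_Fimp : forall a b x, H (NF (Imp a b) false x) -> exists j k,
    H (NR x (LN j) (LN k)) /\ H (NF a true (LN j)) /\ H (NF b false (LN k)) /\
    (x = LN 0 -> j = k);
  sat_Tcond : forall a b x y, H (NF (Cond a b) true x) -> H (NRF a x y) -> H (NF b true y);
  sat_Fcond : forall a b x, x <> LN 0 -> H (NF (Cond a b) false x) -> exists j,
    H (NRF a x (LN j)) /\ H (NF b false (LN j));
  sat_Fcond0 : forall a b, H (NF (Cond a b) false (LN 0)) -> exists j,
    H (NRF a (LN 0) (LN j)) /\ H (NF a true (LN j)) /\ H (NF b false (LN j));
  sat_cut : forall a b s y x, H (NF (Cond a b) s y) -> occurs_in H x ->
    H (NF a false x) \/ (H (NF a true x) /\ H (NRF a x x));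
  sat_Tjust : forall t a x y, H (NF (Just t a) true x) -> H (NRT t x y) -> H (NF a true y);
  sat_Fjust : forall t a x, H (NF (Just t a) false x) -> exists j,
    H (NRT t x (LN j)) /\ H (NF a false (LN j));
  sat_plus : forall s t x y, H (NRT (TPlus s t) x y) -> H (NRT s x y) /\ H (NRT t x y);
  sat_norm : forall x, occurs_in H x -> H (NR (LN 0) x x)
}.

Unset Implicit Arguments.
Set Strict Implicit.

Section CanonicalModel.

Variable H : node -> Prop.
Hypothesis HS : saturated H.
Hypothesis occurs_in_0 : occurs_in H (LN 0).

Ltac occurs_via Hn := eexists; split; [exact Hn | simpl; tauto].

(* [x] is sent to [bar x] only when [bar x] occurs in [H]: this keeps the
   worlds among the occurring labels and the star involutive. *)
Definition canonical_star (x : label) : label :=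
  if excluded_middle_informative (occurs_in H (bar x)) then bar x else x.

Lemma canonical_star_bar {x} : occurs_in H (bar x) -> canonical_star x = bar x.
Proof. unfold canonical_star; destruct excluded_middle_informative; tauto. Qed.

Lemma canonical_star_occurs {x} : occurs_in H x -> occurs_in H (canonical_star x).
Proof. unfold canonical_star; destruct excluded_middle_informative; auto. Qed.

Lemma canonical_star_involutive {x} :
  occurs_in H x -> canonical_star (canonical_star x) = x.
Proof.
  intros ox. unfold canonical_star at 2. destruct excluded_middle_informative as [ob|nb].
  - rewrite canonical_star_bar, bar_involutive; [reflexivity|]. now rewrite bar_involutive.
  - unfold canonical_star. destruct excluded_middle_informative; tauto.
Qed.

Definition canonical_R (x v u : label) : Prop :=
  (x = LN 0 -> v = u) /\ (x <> LN 0 -> H (NR x v u)).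

Definition antecedent (a : fm) : Prop := exists b s y, H (NF (Cond a b) s y).

(* Cut only applies to antecedents of [~>]-formulas; for the other formulas
   [R_a] is taken to be the identity, which makes [w |= a] imply [w R_a w]. *)
Definition canonical_RF (a : fm) (va : label -> Prop) (x y : label) : Prop :=
  (H (NRF a x y) \/ (x = y /\ ~ antecedent a)) /\ (x = LN 0 -> va y).

Fixpoint holds (f : fm) (x : label) : Prop :=
  match f with
  | Atom p => H (NF (Atom p) true x)
  | Neg a => ~ holds a (canonical_star x)
  | And a b => holds a x /\ holds b x
  | Imp a b => forall v u, occurs_in H v -> occurs_in H u ->
      canonical_R x v u -> holds a v -> holds b u
  | Cond a b => forall v, occurs_in H v -> canonical_RF a (holds a) x v -> holds b v
  | Just t a => forall v, occurs_in H v -> H (NRT t x v) -> holds a v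
  end.

Lemma truth_lemma f : forall x,
  (H (NF f true x) -> holds f x) /\ (H (NF f false x) -> ~ holds f x).
Proof.
  induction f as [p|a IHa|a IHa b IHb|a IHa b IHb|a IHa b IHb|t a IHa];
    intros x; split; intros Hx; simpl.
  - exact Hx.
  - intros Hp. eapply (sat_consistent HS); eassumption.
  - rewrite canonical_star_bar by occurs_via (sat_Tneg HS Hx).
    now apply IHa, (sat_Tneg HS).
  - rewrite canonical_star_bar by occurs_via (sat_Fneg HS Hx).
    intros C. now apply C, IHa, (sat_Fneg HS).
  - destruct (sat_Tand HS Hx). split; [apply IHa | apply IHb]; assumption.
  - intros [Ha Hb]. destruct (sat_Fand HS Hx); [eapply IHa | eapply IHb]; eassumption.
  - intros v u ov ou [R0 Rx] Hv.
    assert (Hr : H (NR x v u)).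
    { destruct (label_eq x (LN 0)) as [->|nx]; [|auto].
      rewrite <- (R0 eq_refl). apply (sat_norm HS), ov. }
    destruct (sat_Timp HS Hx Hr) as [A|B].
    + exfalso. exact (proj2 (IHa v) A Hv).
    + now apply IHb.
  - destruct (sat_Fimp HS Hx) as [j [k [Hr [Hj [Hk E]]]]]. intros C.
    apply (proj2 (IHb _) Hk), (C (LN j)); try occurs_via Hr.
    + split; [intros e; f_equal; auto | auto].
    + now apply IHa.
  - intros v _ [[Hr|[_ Hna]] _].
    + apply IHb. eapply (sat_Tcond HS); eassumption.
    + exfalso. apply Hna. now exists b, true, x.
  - intros C. destruct (label_eq x (LN 0)) as [->|nx].
    + destruct (sat_Fcond0 HS Hx) as [j [Hr [Hj Hb]]].
      apply (proj2 (IHb _) Hb), C; [occurs_via Hr|].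
      split; [now left | intros _; now apply IHa].
    + destruct (sat_Fcond HS nx Hx) as [j [Hr Hb]].
      apply (proj2 (IHb _) Hb), C; [occurs_via Hr|].
      split; [now left | intros e; contradiction].
  - intros v _ Hr. apply IHa. eapply (sat_Tjust HS); eassumption.
  - destruct (sat_Fjust HS Hx) as [j [Hr Ha]]. intros C.
    apply (proj2 (IHa _) Ha), C; [occurs_via Hr | exact Hr].
Qed.

Definition world : Type := {x : label | occurs_in H x}.

Lemma world_eq (v w : world) : proj1_sig v = proj1_sig w -> v = w.
Proof. destruct v, w; simpl. apply subset_eq_compat. Qed.

Definition world_star (w : world) : world :=
  exist _ (canonical_star (proj1_sig w)) (canonical_star_occurs (proj2_sig w)).

Lemma world_star_involutive w : world_star (world_star w) = w.
Proof. apply world_eq, canonical_star_involutive, proj2_sig. Qed.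

Definition world0 : world := exist _ (LN 0) occurs_in_0.

Lemma canonical_R_normal (w v u : world) : proj1_sig w = LN 0 ->
  (canonical_R (proj1_sig w) (proj1_sig v) (proj1_sig u) <-> v = u).
Proof.
  intros w0. split.
  - intros [R0 _]. apply world_eq, R0, w0.
  - intros ->. split; [reflexivity | contradiction].
Qed.

Definition canonical_model : rmodel := {|
  W := world;
  WN := fun w => proj1_sig w = LN 0;
  WN_nonempty := ex_intro _ world0 eq_refl;
  R := fun w v u => canonical_R (proj1_sig w) (proj1_sig v) (proj1_sig u);
  R_normal := canonical_R_normal;
  RFm := fun a w v => canonical_RF a (holds a) (proj1_sig w) (proj1_sig v);
  RTm := fun t w v => H (NRT t (proj1_sig w) (proj1_sig v));
  star := world_star;
  star_invol := world_star_involutive;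
  V := fun p w => H (NF (Atom p) true (proj1_sig w))
|}.

Lemma sat_canonical f (w : world) : sat canonical_model w f <-> holds f (proj1_sig w).
Proof.
  revert w. induction f as [p|a IHa|a IHa b IHb|a IHa b IHb|a IHa b IHb|t a IHa];
    intros w; simpl.
  - reflexivity.
  - now rewrite IHa.
  - now rewrite IHa, IHb.
  - split.
    + intros A v u ov ou Hr Hv.
      apply (IHb (exist _ u ou)), (A (exist _ v ov)); [exact Hr | now apply IHa].
    + intros A [v ov] [u ou] Hr Hv.
      apply (IHb (exist _ u ou)), (A v u ov ou Hr), (IHa (exist _ v ov)), Hv.
  - split.
    + intros A v ov Hr. apply (IHb (exist _ v ov)), A, Hr.
    + intros A [v ov] Hr. apply (IHb (exist _ v ov)), (A v ov Hr).
  - split.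
    + intros A v ov Hr. apply (IHa (exist _ v ov)), A, Hr.
    + intros A [v ov] Hr. apply (IHa (exist _ v ov)), (A v ov Hr).
Qed.

Lemma canonical_model_JRC : JRC_model canonical_model.
Proof.
  split; [|split]; simpl.
  - intros w a v w0 [_ Hv]. apply sat_canonical, Hv, w0.
  - intros [x ox] a Hx. apply sat_canonical in Hx. simpl in *.
    split; [|intros _; exact Hx].
    destruct (classic (antecedent a)) as [[b [s [y Hc]]]|Hna]; [|right; auto].
    destruct (sat_cut HS Hc ox) as [Hf|[_ Hr]]; [|left; exact Hr].
    exfalso. exact (proj2 (truth_lemma a x) Hf Hx).
  - intros s t w v Hr. apply (sat_plus HS Hr).
Qed.

Lemma canonical_countermodel (T : list fm) (phi : fm) :
  H (NF phi false (LN 0)) -> (forall psi, In psi T -> H (NF psi true (LN 0))) ->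
  ~ entails T phi.
Proof.
  intros Hphi HT HE.
  apply (proj2 (truth_lemma phi (LN 0)) Hphi).
  apply (sat_canonical phi world0), (HE _ canonical_model_JRC world0 eq_refl).
  intros psi Hpsi. apply sat_canonical, truth_lemma, HT, Hpsi.
Qed.

End CanonicalModel.

Definition label_index (x : label) : nat := match x with LN i | LS i => i end.

Definition fresh_nat (B : list node) : nat :=
  S (list_max (map label_index (flat_map labels_of B))).

Lemma fresh_nat_fresh B j : fresh_nat B <= j -> fresh j B.
Proof.
  intros Hj [n [Hn Hx]].
  assert (Hin : In j (map label_index (flat_map labels_of B))).
  { change j with (label_index (LN j)). apply in_map, in_flat_map. eauto. }
  pose proof (proj1 (list_max_le (map label_index (flat_map labels_of B)) _) (le_n _))
    as Hmax.
  rewrite Forall_forall in Hmax. specialize (Hmax _ Hin). unfold fresh_nat in Hj. lia.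
Qed.

Inductive rule : Type :=
  r_Tneg | r_Fneg | r_Tand | r_Fand | r_Timp | r_Fimp | r_Tcond | r_Fcond
| r_cut | r_Tjust | r_Fjust | r_plus | r_norm.

Definition all_rules : list rule :=
  [r_Tneg; r_Fneg; r_Tand; r_Fand; r_Timp; r_Fimp; r_Tcond; r_Fcond;
   r_cut; r_Tjust; r_Fjust; r_plus; r_norm].

Lemma in_all_rules r : In r all_rules.
Proof. destruct r; simpl; tauto. Qed.

(* A non-branching rule yields the same extension twice; [i] selects a label
   of [n2] (for cut) or of [n1] (for normality). *)
Definition expand (B : list node) (r : rule) (n1 n2 : node) (i : nat)
  : option (list node * list node) :=
  let j := fresh_nat B in
  match r, n1 with
  | r_Tneg, NF (Neg a) true x => let l := [NF a false (bar x)] in Some (l, l)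
  | r_Fneg, NF (Neg a) false x => let l := [NF a true (bar x)] in Some (l, l)
  | r_Tand, NF (And a b) true x => let l := [NF a true x; NF b true x] in Some (l, l)
  | r_Fand, NF (And a b) false x => Some ([NF a false x], [NF b false x])
  | r_Timp, NF (Imp a b) true x =>
      match n2 with
      | NR x' y z => if label_eq x x' then Some ([NF a false y], [NF b true z]) else None
      | _ => None
      end
  | r_Fimp, NF (Imp a b) false x =>
      let k := if label_eq x (LN 0) then j else S j in
      let l := [NR x (LN j) (LN k); NF a true (LN j); NF b false (LN k)] in Some (l, l)
  | r_Tcond, NF (Cond a b) true x =>
      match n2 with
      | NRF a' x' y =>
          if fm_eq a a' then if label_eq x x' then let l := [NF b true y] in Some (l, l)
          else None else None
      | _ => None
      end
  | r_Fcond, NF (Cond a b) false x =>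
      let l := if label_eq x (LN 0)
               then [NRF a (LN 0) (LN j); NF a true (LN j); NF b false (LN j)]
               else [NRF a x (LN j); NF b false (LN j)] in
      Some (l, l)
  | r_cut, NF (Cond a _) _ _ =>
      match nth_error (labels_of n2) i with
      | Some x => Some ([NF a false x], [NF a true x; NRF a x x])
      | None => None
      end
  | r_Tjust, NF (Just t a) true x =>
      match n2 with
      | NRT t' x' y =>
          if tm_eq t t' then if label_eq x x' then let l := [NF a true y] in Some (l, l)
          else None else None
      | _ => None
      end
  | r_Fjust, NF (Just t a) false x =>
      let l := [NRT t x (LN j); NF a false (LN j)] in Some (l, l)
  | r_plus, NRT (TPlus s t) x y => let l := [NRT s x y; NRT t x y] in Some (l, l)
  | r_norm, _ =>
      match nth_error (labels_of n1) i with
      | Some x => let l := [NR (LN 0) x x] in Some (l, l)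
      | None => None
      end
  | _, _ => None
  end.

Lemma expand_sound {B r n1 n2 i l1 l2} :
  In n1 B -> In n2 B -> expand B r n1 n2 i = Some (l1, l2) ->
  closes (l1 ++ B) -> closes (l2 ++ B) -> closes B.
Proof.
  intros H1 H2 E C1 C2. unfold expand in E.
  destruct r; repeat match type of E with
    | context [match ?s with _ => _ end] => destruct s eqn:?; try discriminate
    end; injection E as <- <-; subst; simpl in *.
  all: try solve [econstructor; eauto using fresh_nat_fresh].
  - eapply c_Fimp with (j := fresh_nat B) (k := S (fresh_nat B));
      eauto using fresh_nat_fresh; (contradiction || lia).
  - eapply c_cut; eauto. exists n2; eauto using nth_error_In.
  - eapply c_norm; eauto. exists n1; eauto using nth_error_In.
Qed.

Definition task : Type := rule * nat * nat * nat.

(* Nodes are addressed by their position in [rev B]: branches only grow at the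
   front, so these addresses stay valid in all later stages. *)
Definition step (B : list node) (t : task) : list node :=
  let '(r, p1, p2, i) := t in
  match nth_error (rev B) p1, nth_error (rev B) p2 with
  | Some n1, Some n2 =>
      match expand B r n1 n2 i with
      | Some (l1, l2) =>
          if excluded_middle_informative (closes (l1 ++ B)) then l2 ++ B else l1 ++ B
      | None => B
      end
  | _, _ => B
  end.

Lemma step_extends B t : exists e, step B t = e ++ B.
Proof.
  destruct t as [[[r p1] p2] i]; simpl.
  destruct (nth_error (rev B) p1), (nth_error (rev B) p2);
    try destruct (expand _ _ _ _ _) as [[l1 l2]|];
    try destruct excluded_middle_informative; eauto; now exists [].
Qed.

Lemma step_open B t : ~ closes B -> ~ closes (step B t).
Proof.
  intros HB. destruct t as [[[r p1] p2] i]; simpl.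
  destruct (nth_error (rev B) p1) as [n1|] eqn:E1, (nth_error (rev B) p2) as [n2|] eqn:E2;
    auto.
  destruct (expand B r n1 n2 i) as [[l1 l2]|] eqn:E; auto.
  destruct excluded_middle_informative as [C1|C1]; auto.
  intros C2. apply HB. eapply expand_sound; [| | exact E | exact C1 | exact C2];
    apply in_rev; eapply nth_error_In; eassumption.
Qed.

Lemma step_fires {B r p1 p2 i n1 n2 l1 l2} :
  nth_error (rev B) p1 = Some n1 -> nth_error (rev B) p2 = Some n2 ->
  expand B r n1 n2 i = Some (l1, l2) ->
  step B (r, p1, p2, i) = l1 ++ B \/ step B (r, p1, p2, i) = l2 ++ B.
Proof.
  intros E1 E2 E. simpl. rewrite E1, E2, E.
  destruct excluded_middle_informative; auto.
Qed.

(* The first Cantor coordinate of [n] is ignored, so every task recurs. *)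
Definition task_of (n : nat) : task :=
  let '(_, a) := of_nat n in
  let '(k, b) := of_nat a in
  let '(p1, c) := of_nat b in
  let '(p2, i) := of_nat c in
  (nth k all_rules r_Tneg, p1, p2, i).

Lemma task_of_recurs t m : exists n, m <= n /\ task_of n = t.
Proof.
  destruct t as [[[r p1] p2] i].
  destruct (In_nth all_rules r r_Tneg (in_all_rules r)) as [k [_ Hk]].
  exists (to_nat (m, to_nat (k, to_nat (p1, to_nat (p2, i))))). split.
  - pose proof (to_nat_non_decreasing m (to_nat (k, to_nat (p1, to_nat (p2, i))))). lia.
  - unfold task_of. now rewrite !cancel_of_to, Hk.
Qed.

Fixpoint stage (B0 : list node) (n : nat) : list node :=
  match n with 0 => B0 | S n => step (stage B0 n) (task_of n) end.

Definition limit (B0 : list node) (n : node) : Prop := exists m, In n (stage B0 m).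

Lemma stage_extends B0 {m n} : m <= n -> exists e, stage B0 n = e ++ stage B0 m.
Proof.
  induction 1 as [|n _ [e He]]; [now exists [] |].
  destruct (step_extends (stage B0 n) (task_of n)) as [e' He']. simpl.
  rewrite He', He, app_assoc. eauto.
Qed.

Lemma stage_mono {B0 m n nd} : m <= n -> In nd (stage B0 m) -> In nd (stage B0 n).
Proof. intros Hmn. destruct (stage_extends B0 Hmn) as [e ->]. auto using in_or_app. Qed.

Lemma stage_address {B0 m} n {p nd} : m <= n ->
  nth_error (rev (stage B0 m)) p = Some nd -> nth_error (rev (stage B0 n)) p = Some nd.
Proof.
  intros Hmn E. destruct (stage_extends B0 Hmn) as [e ->].
  rewrite rev_app_distr, nth_error_app1; auto. apply nth_error_Some. congruence.
Qed.

Lemma stage_open {B0} : ~ closes B0 -> forall n, ~ closes (stage B0 n).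
Proof. intros HB n. induction n; simpl; auto using step_open. Qed.

Lemma limit_address {B0 nd} :
  limit B0 nd -> exists m p, nth_error (rev (stage B0 m)) p = Some nd.
Proof.
  intros [m Hm]. apply in_rev, In_nth_error in Hm as [p Hp]. eauto.
Qed.

Lemma limit_fires {B0} r {n1 n2} i : limit B0 n1 -> limit B0 n2 -> exists B,
  forall l1 l2, expand B r n1 n2 i = Some (l1, l2) ->
  (forall n, In n l1 -> limit B0 n) \/ (forall n, In n l2 -> limit B0 n).
Proof.
  intros H1 H2.
  destruct (limit_address H1) as [m1 [p1 E1]], (limit_address H2) as [m2 [p2 E2]].
  destruct (task_of_recurs (r, p1, p2, i) (m1 + m2)) as [n [Hn Ht]].
  exists (stage B0 n). intros l1 l2 E.
  apply (stage_address n) in E1, E2; try lia.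
  destruct (step_fires E1 E2 E) as [Hs|Hs]; [left | right]; intros nd Hnd;
    exists (S n); simpl; rewrite Ht, Hs; auto using in_or_app.
Qed.

Ltac fire_rule r i H1 H2 :=
  let F := fresh "F" in
  destruct (limit_fires r i H1 H2) as [? F]; simpl in F;
  repeat match type of F with
  | context [label_eq ?x ?x] => destruct (label_eq x x); [|congruence]
  | context [fm_eq ?a ?a] => destruct (fm_eq a a); [|congruence]
  | context [tm_eq ?t ?t] => destruct (tm_eq t t); [|congruence]
  end;
  try match goal with E : nth_error _ _ = Some _ |- _ => rewrite E in F end;
  destruct (F _ _ eq_refl) as [L|L].

Lemma limit_saturated B0 : ~ closes B0 -> saturated (limit B0).
Proof.
  intros HB. constructor.
  - intros f x [m1 H1] [m2 H2]. apply (stage_open HB (m1 + m2)).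
    apply c_closed with f x; [revert H1 | revert H2]; apply stage_mono; lia.
  - intros a x Hx. fire_rule r_Tneg 0 Hx Hx; apply L; simpl; auto.
  - intros a x Hx. fire_rule r_Fneg 0 Hx Hx; apply L; simpl; auto.
  - intros a b x Hx. fire_rule r_Tand 0 Hx Hx; split; apply L; simpl; auto.
  - intros a b x Hx. fire_rule r_Fand 0 Hx Hx; [left | right]; apply L; simpl; auto.
  - intros a b x y z Hx Hr. fire_rule r_Timp 0 Hx Hr; [left | right]; apply L; simpl; auto.
  - intros a b x Hx. fire_rule r_Fimp 0 Hx Hx; do 2 eexists;
      refine (conj (L _ _) (conj (L _ _) (conj (L _ _) _))); simpl; auto;
      intros ->; now destruct label_eq.
  - intros a b x y Hx Hr. fire_rule r_Tcond 0 Hx Hr; apply L; simpl; auto.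
  - intros a b x nx Hx. fire_rule r_Fcond 0 Hx Hx; destruct label_eq; try contradiction;
      eexists; split; apply L; simpl; auto.
  - intros a b Hx. fire_rule r_Fcond 0 Hx Hx; eexists; repeat split; apply L; simpl; auto.
  - intros a b s y x Hc [n [Hn Hx]]. apply In_nth_error in Hx as [i Hi].
    fire_rule r_cut i Hc Hn; [left | right; split]; apply L; simpl; auto.
  - intros t a x y Hx Hr. fire_rule r_Tjust 0 Hx Hr; apply L; simpl; auto.
  - intros t a x Hx. fire_rule r_Fjust 0 Hx Hx; eexists; split; apply L; simpl; auto.
  - intros s t x y Hx. fire_rule r_plus 0 Hx Hx; split; apply L; simpl; auto.
  - intros x [n [Hn Hx]]. apply In_nth_error in Hx as [i Hi].
    fire_rule r_norm i Hn Hn; apply L; simpl; auto.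
Qed.

Theorem mainTheorem18 : forall (T : list fm) (phi : fm),
  entails T phi -> derivable T phi.
Proof.
  intros T phi HE. apply NNPP. intros Hopen.
  set (B0 := NF phi false (LN 0) :: map (fun psi => NF psi true (LN 0)) T) in Hopen.
  assert (Hphi : limit B0 (NF phi false (LN 0))) by (exists 0; now left).
  refine (canonical_countermodel _ (limit_saturated B0 Hopen) _ T phi Hphi _ HE).
  - exists (NF phi false (LN 0)). split; [exact Hphi | now left].
  - intros psi Hpsi. exists 0. right. apply in_map_iff. eauto.
Qed.
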